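(* For $k\in\mathbb Z_{>0}$, $0\le l\le k$ and $N\ge1$, the number $p(k,l,N)$ of $ehf$-monomials of length $N$ equals $d^{(N)}_{k,l}(0)$.
   Context: An ordered monomial is a formal product $f_{n-1}^{a_{n-1}}h_{n-1}^{b_{n-1}}e_{n-1}^{c_{n-1}}\cdots e_2^{c_2}f_1^{a_1}h_1^{b_1}e_1^{c_1}f_0^{a_0}$ determined by its nonnegative integer exponents (set $a_i=b_i=c_i=0$ for $i\ge n$); it is an $ehf$-monomial (for given $k,l$) if (i) $a_i+a_{i+1}+b_{i+1}\le k$ for $i\ge0$; (ii) $a_i+b_{i+1}+c_{i+1}\le k$ for $i\ge0$; (iii) $a_i+b_i+c_{i+1}\le k$ for $i>0$; (iv) $b_i+c_i+c_{i+1}\le k$ for $i>0$; (v) $a_0\le l$, $c_1\le k-l$; it has length $N$ if $a_i=b_i=c_i=0$ for $i\ge N$. The level $k$ Verlinde algebra has basis $\pi_0,\dots,\pi_k$ with $\pi_l\pi_{l'}=\sum_i\pi_i$, sum over $|l-l'|\le i\le\min(2k-l-l',l+l')$, $i+l-l'$ even; $d^{(N)}_{k,l}(0)$ is defined by $(\pi_0+2\pi_1+\cdots+(k+1)\pi_k)^N=\sum_ld^{(N)}_{k,l}(0)\pi_l$. *)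

From mathcomp Require Import all_boot.
Set Implicit Arguments. Unset Strict Implicit. Unset Printing Implicit Defensive.

(* An exponent vector of length N: entries indexed by 0..N-1.  Every exponent
   of an ehf-monomial is <= k (by (i) for a_i, by (iv) for b_i and c_i), so
   exponents are taken in 'I_(k+1) without loss. *)
Definition expvec (k N : nat) := {ffun 'I_N -> 'I_k.+1}.

Definition ext (k N : nat) (f : expvec k N) (i : nat) : nat :=
  match @insub nat (fun j => j < N) 'I_N i with
  | Some j => val (f j)
  | None => 0
  end.

(* an ordered monomial of length N: exponents a_0..a_{N-1}, b_1..b_{N-1},
   c_1..c_{N-1}; the (nonexistent) b_0, c_0 slots are required to be 0. *)
Definition monomial (k N : nat) := (expvec k N * expvec k N * expvec k N)%type.

Definition is_ehf (k l N : nat) (m : monomial k N) : bool :=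
  let: (fa, fb, fc) := m in
  let a := ext fa in let b := ext fb in let c := ext fc in
  [&& b 0 == 0, c 0 == 0,
      (* (i), (ii) for 0 <= i (only i < N matters; beyond, all vanish) *)
      [forall i : 'I_N, a i + a i.+1 + b i.+1 <= k],
      [forall i : 'I_N, a i + b i.+1 + c i.+1 <= k],
      [forall i : 'I_N, (0 < i) ==> (a i + b i + c i.+1 <= k)],
      [forall i : 'I_N, (0 < i) ==> (b i + c i + c i.+1 <= k)],
      a 0 <= l & c 1 <= k - l].

Definition p_ehf (k l N : nat) : nat := #|[pred m : monomial k N | is_ehf l m]|.

(* elements: coefficient vectors on the basis pi_0..pi_k *)
Definition verl (k : nat) := 'I_k.+1 -> nat.

Definition fusion (k l l' i : nat) : bool :=
  [&& (l - l') + (l' - l) <= i, i <= minn (2 * k - l - l') (l + l')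
    & ~~ odd (i + l + l')].

Definition vmul (k : nat) (x y : verl k) : verl k :=
  fun i => \sum_(j < k.+1) \sum_(j' < k.+1) x j * y j' * fusion k j j' i.

(* x^N for N >= 1 *)
Definition vpow (k : nat) (x : verl k) (N : nat) : verl k :=
  iter N.-1 (vmul x) x.

Definition vsum (k : nat) : verl k := fun j => (val j).+1.

Definition d0 (k N : nat) (l : 'I_k.+1) : nat := vpow (@vsum k) N l.

Arguments p_ehf k l N : clear implicits.
Arguments d0 k N l : clear implicits.

From mathcomp Require Import all_boot zify.
Set Implicit Arguments. Unset Strict Implicit. Unset Printing Implicit Defensive.

(* Reading an ordered monomial from the left, conditions (i)-(iv) between consecutive
   triples (a_i, b_i, c_i) and (a_(i+1), b_(i+1), c_(i+1)) involve the earlier triple only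
   through a_i and its load s_i = b_i + max(a_i, c_i); by (v) the triple of index 0 acts
   as a state (a_0, l).  So p(k,l,N) is computed by a transfer matrix on states (a, s).
   Summed over a <= l, the number of admissible steps from the state (a, l) to a triple
   (A, B, C) of load S is w(l,S) = (min(l,k-S)+1)(min(S,k-l)+1) for every A <= S, and 0
   for A > S.  On the Verlinde side, pi_l occurs in pi_j pi_S for j in a progression of
   step 2 starting at |l-S|, and the sum of j+1 over it is again w(l,S).  Hence both
   sides satisfy x_(N+1)(l) = sum_S w(l,S) x_N(S) with x_1(l) = l+1. *)

Lemma forall_ordS n (P : pred nat) :
  [forall i : 'I_n.+1, P i] = P 0 && [forall i : 'I_n, P i.+1].
Proof.
apply/forallP/andP => [allP | [P0 /forallP allP] [[|i] lt_i]] //.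
  by split; [exact: (allP ord0) | apply/forallP => i; exact: (allP (lift ord0 i))].
exact: (allP (Ordinal (lt_i : i < n))).
Qed.

Lemma forall_and (T : finType) (P Q : pred T) :
  [forall i, P i && Q i] = [forall i, P i] && [forall i, Q i].
Proof.
apply/forallP/andP => [PQ | [/forallP-allP /forallP-allQ] i]; last by rewrite allP allQ.
by split; apply/forallP => i; case/andP: (PQ i).
Qed.

Lemma sum_mul_eq K m (F : nat -> nat) :
  \sum_(j < K) F j * (j == m :> nat) = (m < K) * F m.
Proof.
rewrite -[RHS]mulnC; transitivity (\sum_(j < K | j == m :> nat) F j).
  by rewrite [RHS]big_mkcond; apply: eq_bigr => j _; case: eqP; rewrite ?muln1 ?muln0.
by rewrite big_ord1_eq; case: ltnP; rewrite ?muln1 ?muln0.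
Qed.

Lemma sum_leq_ord K t : \sum_(i < K) (i <= t : nat) = minn K t.+1.
Proof. by elim: K => [|K IH]; rewrite ?big_ord0 // big_ord_recr /= IH; lia. Qed.

Lemma sum_even_progression lo T K : lo + T.*2 < K ->
  \sum_(j < K) j.+1 * [&& lo <= j, j <= lo + T.*2 & ~~ odd (j + lo)] = T.+1 * (lo + T).+1.
Proof.
elim: T => [|T IH] lt_K.
  rewrite (eq_bigr (fun j : 'I_K => j.+1 * (j == lo :> nat))) => [|j _].
    by rewrite sum_mul_eq; lia.
  by congr (_ * _); lia.
rewrite (eq_bigr (fun j : 'I_K => j.+1 * [&& lo <= j, j <= lo + T.*2 & ~~ odd (j + lo)]
   + j.+1 * (j == lo + T.+1.*2 :> nat))) => [|j _].
  by rewrite big_split IH ?sum_mul_eq /=; lia.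
by rewrite -mulnDr; congr (_ * _); lia.
Qed.

Lemma card_pred_sum (T : finType) (P : pred T) : #|[pred x | P x]| = \sum_x P x.
Proof.
by rewrite -sum1_card [LHS]big_mkcond; apply: eq_bigr => x _; rewrite inE; case: (P x).
Qed.

Definition fcons (X : Type) n (x : X) (f : {ffun 'I_n -> X}) : {ffun 'I_n.+1 -> X} :=
  [ffun i => if unlift ord0 i is Some j then f j else x].

Definition ftail (X : Type) n (f : {ffun 'I_n.+1 -> X}) : {ffun 'I_n -> X} :=
  [ffun j => f (lift ord0 j)].

Lemma fcons0 (X : Type) n (x : X) (f : {ffun 'I_n -> X}) : fcons x f ord0 = x.
Proof. by rewrite ffunE unlift_none. Qed.

Lemma fcons_lift (X : Type) n (x : X) (f : {ffun 'I_n -> X}) j : fcons x f (lift ord0 j) = f j.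
Proof. by rewrite ffunE liftK. Qed.

Lemma ftail_fcons (X : Type) n (x : X) (f : {ffun 'I_n -> X}) : ftail (fcons x f) = f.
Proof. by apply/ffunP => j; rewrite ffunE fcons_lift. Qed.

Lemma fcons_ftail (X : Type) n (f : {ffun 'I_n.+1 -> X}) : fcons (f ord0) (ftail f) = f.
Proof. by apply/ffunP => i; rewrite ffunE; case: unliftP => [j ->|->] //; rewrite ffunE. Qed.

Section Transfer.

Variable k : nat.

Definition weight (l S : nat) : nat := (minn l (k - S)).+1 * (minn S (k - l)).+1.

Lemma fusion_even_range l S (j : 'I_k.+1) : l <= k -> S <= k ->
  fusion k j S l = [&& (l - S) + (S - l) <= j, j <= minn (l + S) (2 * k - l - S)
                     & ~~ odd (j + ((l - S) + (S - l)))].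
Proof.
move=> le_lk le_Sk; have := ltn_ord j; rewrite ltnS /fusion => le_jk.
have -> : l + j + S = j + ((l - S) + (S - l)) + (minn l S).*2 by lia.
by rewrite oddD odd_double addbF !andbA; congr (_ && _); lia.
Qed.

Lemma sum_fusion_weight l S : l <= k -> S <= k ->
  \sum_(j < k.+1) j.+1 * fusion k j S l = weight l S.
Proof.
move=> le_lk le_Sk; under eq_bigr do rewrite fusion_even_range //.
have -> : minn (l + S) (2 * k - l - S)
  = (l - S) + (S - l) + (minn (minn l (k - S)) (minn S (k - l))).*2 by lia.
rewrite sum_even_progression /weight; last by lia.
have -> : (l - S) + (S - l) + minn (minn l (k - S)) (minn S (k - l))
  = maxn (minn l (k - S)) (minn S (k - l)) by lia.
by case: leqP => // _; rewrite mulnC.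
Qed.

Lemma vpow_vsumS n (l : 'I_k.+1) :
  vpow (@vsum k) n.+2 l = \sum_(S < k.+1) weight l S * vpow (@vsum k) n.+1 S.
Proof.
have -> : vpow (@vsum k) n.+2 l = vmul (@vsum k) (vpow (@vsum k) n.+1) l by [].
rewrite /vmul exchange_big; apply: eq_bigr => S _ /=.
rewrite -(sum_fusion_weight (ltn_ord l) (ltn_ord S)) big_distrl; apply: eq_bigr => j _ /=.
by rewrite /vsum mulnAC.
Qed.

(* (A, B, C) may follow a triple with a-exponent x and load s: conditions (iii) and (iv)
   at the earlier index together say C + s <= k. *)
Definition ehf_step (x s A B C : nat) : bool :=
  [&& x + A + B <= k, x + B + C <= k & C + s <= k].

Definition load (A B C : nat) : nat := B + maxn A C.

Definition transfer (x s A S : nat) : nat :=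
  \sum_(B < k.+1) \sum_(C < k.+1) ehf_step x s A B C * (S == load A B C).

Lemma sum_transfer l A S : l <= k -> S <= k ->
  \sum_(a < k.+1) (a <= l) * transfer a l A S = (A <= S) * weight l S.
Proof.
move=> le_lk le_Sk.
have sum_B a C : \sum_(B < k.+1) ehf_step a l A B C * (S == load A B C)
    = [&& A <= S, a + S <= k, C <= S & C + l <= k].
  rewrite (eq_bigr (fun B : 'I_k.+1 => ((maxn A C <= S) && ehf_step a l A (S - maxn A C) C)
      * (B == S - maxn A C :> nat))) => [|B _].
    by rewrite (sum_mul_eq _ _ (fun=> _)) mulnb /ehf_step; congr nat_of_bool; lia.
  by rewrite /ehf_step /load !mulnb; congr nat_of_bool; lia.
transitivity (\sum_(a < k.+1) \sum_(C < k.+1)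
    (A <= S) * (a <= minn l (k - S)) * (C <= minn S (k - l))).
  apply: eq_bigr => a _; rewrite /transfer exchange_big big_distrr /=.
  by apply: eq_bigr => C _; rewrite sum_B !mulnb; congr nat_of_bool; lia.
under eq_bigr do rewrite -big_distrr.
by rewrite -big_distrl -big_distrr /= !sum_leq_ord /weight mulnA; congr (_ * _ * _); lia.
Qed.

Lemma ext_ord N (f : expvec k N) (i : 'I_N) : ext f i = f i.
Proof. by rewrite /ext valK. Qed.

Lemma ext_out N (f : expvec k N) i : N <= i -> ext f i = 0.
Proof. by move=> le_Ni; rewrite /ext insubF // ltnNge le_Ni. Qed.

Lemma ext_fcons0 N x (f : expvec k N) : ext (fcons x f) 0 = x.
Proof. by rewrite (ext_ord _ ord0) fcons0. Qed.

Lemma ext_fconsS N x (f : expvec k N) i : ext (fcons x f) i.+1 = ext f i.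
Proof.
have [lt_iN | le_Ni] := ltnP i N; last by rewrite !ext_out.
have -> : i.+1 = lift ord0 (Ordinal lt_iN) :> nat by [].
by rewrite ext_ord fcons_lift -(ext_ord f (Ordinal lt_iN)).
Qed.

Definition mcons n (t : 'I_k.+1 * 'I_k.+1 * 'I_k.+1) (m : monomial k n) : monomial k n.+1 :=
  (fcons t.1.1 m.1.1, fcons t.1.2 m.1.2, fcons t.2 m.2).

Lemma sum_monomialS n (F : monomial k n.+1 -> nat) :
  \sum_m F m = \sum_(A < k.+1) \sum_(B < k.+1) \sum_(C < k.+1)
                 \sum_(m : monomial k n) F (mcons (A, B, C) m).
Proof.
rewrite !pair_big /= (reindex (fun p => mcons p.1 p.2)) /=.
  by apply: eq_bigr => -[[[A B] C] m].
exists (fun m : monomial k n.+1 =>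
    ((m.1.1 ord0, m.1.2 ord0, m.2 ord0), (ftail m.1.1, ftail m.1.2, ftail m.2)))
  => [[[[A B] C] [[fa fb] fc]] | [[fa fb] fc]] _;
  by rewrite /mcons /= ?fcons0 ?ftail_fcons ?fcons_ftail.
Qed.

Definition ehf_at (a b c : nat -> nat) (i : nat) : bool :=
  [&& a i + a i.+1 + b i.+1 <= k, a i + b i.+1 + c i.+1 <= k,
      (0 < i) ==> (a i + b i + c i.+1 <= k) & (0 < i) ==> (b i + c i + c i.+1 <= k)].

Definition ehf_link (a b c : nat -> nat) (i : nat) : bool :=
  ehf_step (a i) (load (a i) (b i) (c i)) (a i.+1) (b i.+1) (c i.+1).

Lemma ehf_atS a b c i : ehf_at a b c i.+1 = ehf_link a b c i.+1.
Proof. rewrite /ehf_at /ehf_link /ehf_step /load; lia. Qed.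

(* For the exponents of a monomial of length n the last triple checked, of index n, is
   zero. *)
Definition ehf_chain n (x s : nat) (a b c : nat -> nat) : bool :=
  ehf_step x s (a 0) (b 0) (c 0) && [forall i : 'I_n, ehf_link a b c i].

Lemma eq_ehf_chain n x s a b c a' b' c' : a =1 a' -> b =1 b' -> c =1 c' ->
  ehf_chain n x s a b c = ehf_chain n x s a' b' c'.
Proof.
move=> Ea Eb Ec; rewrite /ehf_chain !Ea !Eb !Ec; congr (_ && _).
by apply: eq_forallb => i; rewrite /ehf_link !Ea !Eb !Ec.
Qed.

Lemma ehf_chainS n x s a b c : ehf_chain n.+1 x s a b c =
  ehf_step x s (a 0) (b 0) (c 0) && ehf_chain n (a 0) (load (a 0) (b 0) (c 0))
    (fun i => a i.+1) (fun i => b i.+1) (fun i => c i.+1).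
Proof. by rewrite /ehf_chain forall_ordS. Qed.

Lemma ehf_chain_at l n a b c : l <= k ->
  ehf_chain n (a 0) l (fun i => a i.+1) (fun i => b i.+1) (fun i => c i.+1)
  = [forall i : 'I_n.+1, ehf_at a b c i] && (c 1 <= k - l).
Proof.
move=> le_lk; rewrite forall_ordS andbAC; under eq_forallb do rewrite ehf_atS.
by congr (_ && _); rewrite /ehf_step /ehf_at; lia.
Qed.

Lemma ehf_chain_mcons n x s A B C (m : monomial k n) :
  ehf_chain n.+1 x s (ext (fcons A m.1.1)) (ext (fcons B m.1.2)) (ext (fcons C m.2))
  = ehf_step x s A B C && ehf_chain n A (load A B C) (ext m.1.1) (ext m.1.2) (ext m.2).
Proof.
rewrite ehf_chainS !ext_fcons0.
by rewrite (eq_ehf_chain _ _ _ (ext_fconsS A _) (ext_fconsS B _) (ext_fconsS C _)).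
Qed.

Lemma is_ehf_mcons l n A B C (m : monomial k n) : l <= k ->
  is_ehf l (mcons (A, B, C) m)
  = [&& B == 0 :> nat, C == 0 :> nat,
        ehf_chain n A l (ext m.1.1) (ext m.1.2) (ext m.2) & A <= l].
Proof.
case: m => [[fa fb] fc] le_lk /=.
rewrite -(eq_ehf_chain _ _ _ (ext_fconsS A _) (ext_fconsS B _) (ext_fconsS C _)).
rewrite -[X in ehf_chain _ X](ext_fcons0 A fa) ehf_chain_at // /ehf_at !forall_and.
by rewrite !ext_fcons0 !andbA andbAC.
Qed.

Definition chain_count n (x s : nat) : nat :=
  \sum_(m : monomial k n) ehf_chain n x s (ext m.1.1) (ext m.1.2) (ext m.2).

Lemma chain_count0 x s : chain_count 0 x s = ehf_step x s 0 0 0.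
Proof.
rewrite /chain_count (eq_bigr (fun=> ehf_step x s 0 0 0 : nat)) => [|m _].
  by rewrite sum_nat_const !card_prod !card_ffun !card_ord !expn0 !mul1n.
rewrite /ehf_chain (ext_out m.1.1) ?(ext_out m.1.2) ?(ext_out m.2) //.
case: forallP => [_ | no_link]; first by rewrite andbT.
by case: no_link => -[].
Qed.

Lemma chain_countS n x s :
  chain_count n.+1 x s = \sum_(A < k.+1) \sum_(S < k.+1) transfer x s A S * chain_count n A S.
Proof.
rewrite /chain_count sum_monomialS; apply: eq_bigr => A _.
have step_load B C : ehf_step x s A B C * chain_count n A (load A B C)
    = \sum_(S < k.+1) ehf_step x s A B C * (S == load A B C :> nat) * chain_count n A S.
  under eq_bigr do rewrite mulnAC.
  rewrite (sum_mul_eq _ _ (fun S => ehf_step x s A B C * chain_count n A S)).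
  have [step_ok|] := boolP (ehf_step x s A B C); last by rewrite !muln0.
  by rewrite (_ : load A B C < k.+1) //; move: step_ok; rewrite /ehf_step /load; lia.
transitivity (\sum_(B < k.+1) \sum_(C < k.+1)
    \sum_(S < k.+1) ehf_step x s A B C * (S == load A B C :> nat) * chain_count n A S).
  apply: eq_bigr => B _; apply: eq_bigr => C _; rewrite -step_load big_distrr /=.
  by apply: eq_bigr => m _; rewrite ehf_chain_mcons mulnb.
under eq_bigr do rewrite exchange_big; rewrite exchange_big; apply: eq_bigr => S _.
by rewrite /transfer big_distrl; apply: eq_bigr => B _; rewrite big_distrl.
Qed.

Lemma p_ehf_chain_count l n : l <= k ->
  p_ehf k l n.+1 = \sum_(a < k.+1) (a <= l) * chain_count n a l.
Proof.
move=> le_lk; rewrite /p_ehf card_pred_sum sum_monomialS; apply: eq_bigr => A _.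
rewrite big_ord_recl [X in _ + X]big1 ?addn0 => [|B _]; last first.
  by apply: big1 => C _; apply: big1 => m _; rewrite is_ehf_mcons.
rewrite big_ord_recl [X in _ + X]big1 ?addn0 => [|C _]; last first.
  by apply: big1 => m _; rewrite is_ehf_mcons.
by rewrite big_distrr; apply: eq_bigr => m _; rewrite is_ehf_mcons //= mulnC mulnb.
Qed.

Lemma sum_chain_countS n l : l <= k ->
  \sum_(a < k.+1) (a <= l) * chain_count n.+1 a l
  = \sum_(S < k.+1) weight l S * \sum_(A < k.+1) (A <= S) * chain_count n A S.
Proof.
move=> le_lk; transitivity (\sum_(a < k.+1) \sum_(A < k.+1) \sum_(S < k.+1)
    (a <= l) * transfer a l A S * chain_count n A S).
  apply: eq_bigr => a _; rewrite chain_countS big_distrr; apply: eq_bigr => A _ /=.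
  by rewrite big_distrr; apply: eq_bigr => S _ /=; rewrite mulnA.
rewrite exchange_big; under eq_bigr do rewrite exchange_big.
rewrite exchange_big; apply: eq_bigr => S _; rewrite big_distrr; apply: eq_bigr => A _ /=.
by rewrite -big_distrl /= (sum_transfer _ le_lk (ltn_ord S)) mulnCA mulnA.
Qed.


Lemma sum_chain_count_vpow n (l : 'I_k.+1) :
  \sum_(a < k.+1) (a <= l) * chain_count n a l = vpow (@vsum k) n.+1 l.
Proof.
elim: n l => [|n IH] l.
  rewrite (eq_bigr (fun a : 'I_k.+1 => (a <= l : nat))) => [|a _].
    by rewrite sum_leq_ord /vpow /vsum /=; have := ltn_ord l; lia.
  by rewrite chain_count0 /ehf_step mulnb; congr nat_of_bool; have := ltn_ord l; lia.
rewrite (sum_chain_countS _ (ltn_ord l)) vpow_vsumS; apply: eq_bigr => S _.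
by rewrite IH.
Qed.

End Transfer.

Theorem proposition3p2p3 (k : nat) (l : 'I_k.+1) (N : nat) :
  0 < k -> 1 <= N -> p_ehf k l N = d0 k N l.
Proof.
move=> _; case: N => [//|N] _.
by rewrite (p_ehf_chain_count N (ltn_ord l : l <= k)) sum_chain_count_vpow.
Qed.
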